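(* Let $\mathcal R$ be a DCTRS and let $\langle s,\pi\rangle$, $\langle t,\pi'\rangle$ be safe pairs. For all $k,m\ge0$: $\langle s,\pi\rangle\rightharpoonup_{\mathcal R_k}^{m}\langle t,\pi'\rangle$ if and only if $\langle t,\pi'\rangle\leftharpoondown_{\mathcal R_k}^{m}\langle s,\pi\rangle$.
   Context: Terms $\mathcal T(\mathcal F,\mathcal V)$; $\mathrm{Pos}(t)$ positions ($\epsilon$ root), $t|_p$ subterm, $t[u]_p$ replacement, $\mathrm{Var}(t_1,\dots,t_n)$ the variables occurring in the $t_i$, $\mathrm{Dom}(\sigma)=\{x\mid x\sigma\ne x\}$, $\sigma|_V$ restriction. A DCTRS $\mathcal R$ is a finite set of labelled conditional rules $\beta: l\to r\Leftarrow s_1\twoheadrightarrow t_1,\dots,s_n\twoheadrightarrow t_n$ ($l\notin\mathcal V$) with $\mathrm{Var}(r)\subseteq\mathrm{Var}(l,s_1,\dots,s_n,t_1,\dots,t_n)$ and $\mathrm{Var}(s_i)\subseteq\mathrm{Var}(l,t_1,\dots,t_{i-1})$ for all $i$; labels are unique and rule variables are never renamed. For such a rule let $V_\beta=(\mathrm{Var}(l)\setminus\mathrm{Var}(r,s_1,\dots,s_n,t_1,\dots,t_n))\cup\bigcup_{i=1}^n(\mathrm{Var}(t_i)\setminus\mathrm{Var}(r,s_{i+1},\dots,s_n))$. Traces: $[\,]$ is a trace, and if $\pi,\pi_1,\dots,\pi_n$ are traces, $\beta$ labels a rule with $n$ conditions, $p$ is a position and $\sigma$ a ground substitution, then $\beta(p,\sigma,\pi_1,\dots,\pi_n):\pi$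 is a trace. A trace $\pi$ is safe iff for every trace term $\beta(p,\sigma,\pi_1,\dots,\pi_n)$ in $\pi$, $\sigma$ is ground with $\mathrm{Dom}(\sigma)=V_\beta$ and $\pi_1,\dots,\pi_n$ are safe; $\langle s,\pi\rangle$ ($s$ ground) is safe iff $\pi$ is. Depth-indexed relations on safe pairs: $\rightharpoonup_{\mathcal R_0}$ and $\leftharpoondown_{\mathcal R_0}$ are empty. $\langle s,\pi\rangle\rightharpoonup_{\mathcal R_{k+1}}\langle t,\beta(p,\sigma',\pi_1,\dots,\pi_n):\pi\rangle$ iff there are $p\in\mathrm{Pos}(s)$, rule $\beta$ and ground $\sigma$ with $s|_p=l\sigma$, $\langle s_i\sigma,[\,]\rangle\rightharpoonup_{\mathcal R_k}^{*}\langle t_i\sigma,\pi_i\rangle$ for all $i$, $t=s[r\sigma]_p$, $\sigma'=\sigma|_{V_\beta}$. $\langle t,\beta(p,\sigma',\pi_1,\dots,\pi_n):\pi\rangle\leftharpoondown_{\mathcal R_{k+1}}\langle s,\pi\rangle$ iff this pair is safe, $\beta: l\to r\Leftarrow s_1\twoheadrightarrow t_1,\dots,s_n\twoheadrightarrow t_n\in\mathcal R$, and there is a ground $\theta$ with $\mathrm{Dom}(\theta)=\mathrm{Var}(r,s_1,\dots,s_n)\setminus\mathrm{Dom}(\sigma')$, $t|_p=r\theta$, $\langle t_i\theta\sigma',\pi_i\rangle\leftharpoondown_{\mathcal R_k}^{*}\langle s_i\theta\sigma',[\,]\rangle$ for all $i$, and $s=t[l\theta\sigma']_p$. ($\rightharpoonup_{\mathcal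 R}=\bigcup_k\rightharpoonup_{\mathcal R_k}$, $\leftharpoondown_{\mathcal R}=\bigcup_k\leftharpoondown_{\mathcal R_k}$.) $\to^{m}$ denotes exactly $m$ steps. *)

From Stdlib Require Import List Arith.
Import ListNotations.

Section Defs.
Variables (F V L : Type).

Inductive term : Type :=
| Var : V -> term
| Fun : F -> list term -> term.

Fixpoint vars (t : term) : list V :=
  match t with
  | Var x => [x]
  | Fun _ ts => flat_map vars ts
  end.

Definition ground (t : term) : Prop := vars t = [].

(* Positions: sequences of argument indices (0-based); [] is the root. *)
Definition pos := list nat.

Fixpoint subterm_at (t : term) (p : pos) : option term :=
  match p with
  | [] => Some t
  | i :: p' =>
      match t with
      | Var _ => None
      | Fun _ ts =>
          match nth_error ts i with
          | Some u => subterm_at u p'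
          | None => None
          end
      end
  end.

Fixpoint list_set {A : Type} (l : list A) (i : nat) (a : A) : list A :=
  match l, i with
  | [], _ => []
  | _ :: l', 0 => a :: l'
  | b :: l', S i' => b :: list_set l' i' a
  end.

Fixpoint replace_at (t : term) (p : pos) (u : term) : option term :=
  match p with
  | [] => Some u
  | i :: p' =>
      match t with
      | Var _ => None
      | Fun f ts =>
          match nth_error ts i with
          | Some ti =>
              match replace_at ti p' u with
              | Some ti' => Some (Fun f (list_set ts i ti'))
              | None => None
              end
          | None => None
          end
      end
  end.

Definition subst := V -> term.

Fixpoint app_subst (sigma : subst) (t : term) : term :=
  match t with
  | Var x => sigma x
  | Fun f ts => Fun f (map (app_subst sigma) ts)
  end.

Definition in_dom (sigma : subst) (x : V) : Prop := sigma x <> Var x.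

Definition ground_subst (sigma : subst) : Prop :=
  forall x, in_dom sigma x -> ground (sigma x).

Definition restrict (sigma : subst) (P : V -> Prop) (sigma' : subst) : Prop :=
  forall x, (P x -> sigma' x = sigma x) /\ (~ P x -> sigma' x = Var x).

(* Labelled conditional rules  l -> r <= s1 ->> t1, ..., sn ->> tn *)
Record rule : Type := mkRule {
  lbl : L;
  lhs : term;
  rhs : term;
  conds : list (term * term)
}.

(* Var(l, t_1, ..., t_{i-1})  (i is 0-based here: conditions before index i) *)
Definition dctrs_rule (rl : rule) : Prop :=
  (forall x, lhs rl <> Var x) /\
  (forall x, In x (vars (rhs rl)) ->
     In x (vars (lhs rl)) \/
     exists c, In c (conds rl) /\ (In x (vars (fst c)) \/ In x (vars (snd c)))) /\
  (forall i c, nth_error (conds rl) i = Some c ->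
     forall x, In x (vars (fst c)) ->
       In x (vars (lhs rl)) \/
       exists j c', j < i /\ nth_error (conds rl) j = Some c' /\ In x (vars (snd c'))).

Definition dctrs (R : list rule) : Prop :=
  NoDup (map lbl R) /\ forall rl, In rl R -> dctrs_rule rl.

Definition in_Vbeta (rl : rule) (x : V) : Prop :=
  (In x (vars (lhs rl)) /\
     ~ (In x (vars (rhs rl)) \/
        exists c, In c (conds rl) /\ (In x (vars (fst c)) \/ In x (vars (snd c))))) \/
  (exists i c, nth_error (conds rl) i = Some c /\ In x (vars (snd c)) /\
     ~ (In x (vars (rhs rl)) \/
        exists j c', i < j /\ nth_error (conds rl) j = Some c' /\ In x (vars (fst c')))).

Definition in_vars_rhs_conds (rl : rule) (x : V) : Prop :=
  In x (vars (rhs rl)) \/ exists c, In c (conds rl) /\ In x (vars (fst c)).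

(* Traces: a trace is a list of trace terms beta(p, sigma, pi_1, ..., pi_n) *)
Inductive trace_term : Type :=
| TT : L -> pos -> subst -> list (list trace_term) -> trace_term.

Definition trace := list trace_term.

Section Safe.
Variable R : list rule.

Inductive safe_trace : trace -> Prop :=
| safe_nil : safe_trace []
| safe_cons : forall rl p sigma pis pi,
    In rl R ->
    length pis = length (conds rl) ->
    ground_subst sigma ->
    (forall x, in_dom sigma x <-> in_Vbeta rl x) ->
    (forall pii, In pii pis -> safe_trace pii) ->
    safe_trace pi ->
    safe_trace (TT (lbl rl) p sigma pis :: pi).

Definition safe_pair (a : term * trace) : Prop :=
  ground (fst a) /\ safe_trace (snd a).
End Safe.

Inductive star {A : Type} (rel : A -> A -> Prop) : A -> A -> Prop :=
| star_refl : forall a, star rel a a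
| star_step : forall a b c, rel a b -> star rel b c -> star rel a c.

Inductive nsteps {A : Type} (rel : A -> A -> Prop) : nat -> A -> A -> Prop :=
| nsteps_0 : forall a, nsteps rel 0 a a
| nsteps_S : forall m a b c, rel a b -> nsteps rel m b c -> nsteps rel (S m) a c.

Fixpoint fwd (R : list rule) (k : nat) : term * trace -> term * trace -> Prop :=
  match k with
  | 0 => fun _ _ => False
  | S k' => fun a b =>
      safe_pair R a /\
      exists (p : pos) (rl : rule) (sigma : subst) (pis : list trace)
             (t : term) (sigma' : subst),
        In rl R /\
        ground_subst sigma /\
        subterm_at (fst a) p = Some (app_subst sigma (lhs rl)) /\
        Forall2 (fun c pii =>
                   star (fwd R k') (app_subst sigma (fst c), [])
                                   (app_subst sigma (snd c), pii))
                (conds rl) pis /\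
        replace_at (fst a) p (app_subst sigma (rhs rl)) = Some t /\
        restrict sigma (in_Vbeta rl) sigma' /\
        b = (t, TT (lbl rl) p sigma' pis :: snd a)
  end.

Fixpoint bwd (R : list rule) (k : nat) : term * trace -> term * trace -> Prop :=
  match k with
  | 0 => fun _ _ => False
  | S k' => fun a b =>
      safe_pair R a /\
      exists (t : term) (p : pos) (sigma' : subst) (pis : list trace)
             (pi : trace) (rl : rule) (theta : subst) (s : term),
        a = (t, TT (lbl rl) p sigma' pis :: pi) /\
        In rl R /\
        ground_subst theta /\
        (forall x, in_dom theta x <-> (in_vars_rhs_conds rl x /\ ~ in_dom sigma' x)) /\
        subterm_at t p = Some (app_subst theta (rhs rl)) /\
        Forall2 (fun c pii =>
                   star (bwd R k')
                        (app_subst sigma' (app_subst theta (snd c)), pii)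
                        (app_subst sigma' (app_subst theta (fst c)), []))
                (conds rl) pis /\
        replace_at t p (app_subst sigma' (app_subst theta (lhs rl))) = Some s /\
        b = (s, pi)
  end.

End Defs.

Arguments Var {F V}.
Arguments Fun {F V}.
Arguments vars {F V}.
Arguments ground {F V}.
Arguments subterm_at {F V}.
Arguments replace_at {F V}.
Arguments app_subst {F V}.
Arguments in_dom {F V}.
Arguments ground_subst {F V}.
Arguments restrict {F V}.
Arguments mkRule {F V L}.
Arguments lbl {F V L}.
Arguments lhs {F V L}.
Arguments rhs {F V L}.
Arguments conds {F V L}.
Arguments dctrs_rule {F V L}.
Arguments dctrs {F V L}.
Arguments in_Vbeta {F V L}.
Arguments in_vars_rhs_conds {F V L}.
Arguments TT {F V L}.
Arguments safe_trace {F V L}.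
Arguments safe_pair {F V L}.
Arguments fwd {F V L}.
Arguments bwd {F V L}.

(* A forward step with matcher σ is undone by the backward step whose θ is σ
   restricted to Var(r, s_1, ..., s_n) ∖ Dom(σ'), and a backward step with θ is undone
   by the forward step with matcher θσ'; the conditions are reversed by induction
   on the depth k.  Everything hinges on σ being ground on all variables of the
   rule: on l and r because lσ and rσ are subterms of ground terms, on V_β because
   the recorded σ' is safe, and on the conditions by downward induction over their
   index: a variable of t_i outside V_β occurs in r or in some later s_j, and s_iσ
   is ground because it rewrites to (or equals) the ground term t_iσ. *)

From Stdlib Require Import List Lia Classical ClassicalEpsilon.
Import ListNotations.

Section Terms.
Context {F V : Type}.

Fixpoint term_ind_nested (P : term F V -> Prop) (Hv : forall x, P (Var x))
  (Hf : forall f ts, Forall P ts -> P (Fun f ts)) (t : term F V) {struct t} : P t :=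
  match t with
  | Var x => Hv x
  | Fun f ts => Hf f ts ((fix go (l : list (term F V)) : Forall P l :=
      match l with
      | [] => Forall_nil P
      | u :: l' => Forall_cons u (term_ind_nested P Hv Hf u) (go l')
      end) ts)
  end.

Lemma vars_app_subst (sg : subst F V) (u : term F V) y :
  In y (vars (app_subst sg u)) <-> exists x, In x (vars u) /\ In y (vars (sg x)).
Proof.
  induction u as [x|f ts IH] using term_ind_nested; simpl.
  - split; [intros; exists x; auto | intros [z [[->|[]] Hy]]; auto].
  - rewrite Forall_forall in IH. rewrite in_flat_map. split.
    + intros [w [Hw Hy]]. apply in_map_iff in Hw as [u [<- Hu]].
      apply IH in Hy as [x [Hx Hy']]; auto.
      exists x; split; auto. apply in_flat_map; eauto.
    + intros [x [Hx Hy]]. apply in_flat_map in Hx as [u [Hu Hxu]].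
      exists (app_subst sg u); split; [apply in_map; auto|].
      apply (proj2 (IH u Hu)); eauto.
Qed.

Lemma ground_iff_no_vars (t : term F V) : ground t <-> forall y, ~ In y (vars t).
Proof.
  unfold ground; destruct (vars t) as [|a l]; split; intros H.
  - intros y [].
  - reflexivity.
  - discriminate.
  - exfalso; apply (H a); left; auto.
Qed.

Lemma ground_app_subst (sg : subst F V) u :
  ground (app_subst sg u) <-> forall x, In x (vars u) -> ground (sg x).
Proof.
  rewrite ground_iff_no_vars. split.
  - intros H x Hx. apply ground_iff_no_vars. intros y Hy.
    apply (H y). apply vars_app_subst; eauto.
  - intros H y Hy. apply vars_app_subst in Hy as [x [Hx Hy]].
    apply ground_iff_no_vars in Hy; auto.
Qed.

Lemma ground_neq_Var (u : term F V) x : ground u -> u <> Var x.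
Proof. intros H ->. discriminate H. Qed.

Lemma app_subst_ext (s1 s2 : subst F V) u :
  (forall x, In x (vars u) -> s1 x = s2 x) -> app_subst s1 u = app_subst s2 u.
Proof.
  induction u as [x|f ts IH] using term_ind_nested; intros Hx; simpl.
  - apply Hx; simpl; auto.
  - f_equal. apply map_ext_in. intros a Ha. rewrite Forall_forall in IH.
    apply IH; auto. intros x Hx'. apply Hx. simpl. apply in_flat_map; eauto.
Qed.

Lemma app_subst_comp (s1 s2 : subst F V) u :
  app_subst s1 (app_subst s2 u) = app_subst (fun x => app_subst s1 (s2 x)) u.
Proof.
  induction u as [x|f ts IH] using term_ind_nested; simpl; auto.
  f_equal. rewrite map_map. apply map_ext_in. intros a Ha.
  rewrite Forall_forall in IH. auto.
Qed.

Lemma app_subst_Var (u : term F V) : app_subst Var u = u.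
Proof.
  induction u as [x|f ts IH] using term_ind_nested; simpl; auto.
  f_equal. rewrite <- (map_id ts) at 2. apply map_ext_in. intros a Ha.
  rewrite Forall_forall in IH. auto.
Qed.

Lemma app_subst_ground (sg : subst F V) u : ground u -> app_subst sg u = u.
Proof.
  intros Hg. rewrite <- (app_subst_Var u) at 2. apply app_subst_ext. intros x Hx.
  exfalso. apply ground_iff_no_vars in Hx; auto.
Qed.

Definition restriction (sg : subst F V) (P : V -> Prop) : subst F V :=
  fun x => if excluded_middle_informative (P x) then sg x else Var x.

Lemma restriction_in (sg : subst F V) (P : V -> Prop) x :
  P x -> restriction sg P x = sg x.
Proof. unfold restriction. destruct (excluded_middle_informative (P x)); tauto. Qed.

Lemma restriction_notin (sg : subst F V) (P : V -> Prop) x :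
  ~ P x -> restriction sg P x = Var x.
Proof. unfold restriction. destruct (excluded_middle_informative (P x)); tauto. Qed.

End Terms.

Section Positions.

Lemma nth_error_list_set_eq {A} (l : list A) i a b :
  nth_error l i = Some a -> nth_error (list_set l i b) i = Some b.
Proof.
  revert i; induction l as [|c l IH]; intros [|i] H; simpl in *; try discriminate; auto.
Qed.

Lemma list_set_nth_error {A} (l : list A) i a : nth_error l i = Some a -> list_set l i a = l.
Proof.
  revert i; induction l as [|c l IH]; intros [|i] H; simpl in *; try discriminate.
  - now inversion H.
  - now rewrite IH.
Qed.

Lemma list_set_list_set {A} (l : list A) i a b :
  list_set (list_set l i a) i b = list_set l i b.
Proof. revert i; induction l as [|c l IH]; intros [|i]; simpl; auto. now rewrite IH. Qed.

Context {F V : Type}.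

Lemma subterm_at_replace_at (p : pos) : forall (t u t' : term F V),
  replace_at t p u = Some t' -> subterm_at t' p = Some u.
Proof.
  induction p as [|i p IH]; intros t u t' H; simpl in *.
  - now inversion H.
  - destruct t as [x|f ts]; [discriminate|].
    destruct (nth_error ts i) as [ti|] eqn:E; [|discriminate].
    destruct (replace_at ti p u) as [ti'|] eqn:E2; [|discriminate].
    inversion H; subst. simpl. rewrite (nth_error_list_set_eq _ _ _ _ E). eauto.
Qed.

Lemma replace_at_subterm_at (p : pos) : forall (t v : term F V),
  subterm_at t p = Some v -> replace_at t p v = Some t.
Proof.
  induction p as [|i p IH]; intros t v H; simpl in *.
  - now inversion H.
  - destruct t as [x|f ts]; [discriminate|].
    destruct (nth_error ts i) as [ti|] eqn:E; [|discriminate].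
    now rewrite (IH _ _ H), (list_set_nth_error _ _ _ E).
Qed.

Lemma replace_at_replace_at (p : pos) : forall (t u v t' : term F V),
  replace_at t p u = Some t' -> replace_at t' p v = replace_at t p v.
Proof.
  induction p as [|i p IH]; intros t u v t' H; simpl in *; auto.
  destruct t as [x|f ts]; [discriminate|].
  destruct (nth_error ts i) as [ti|] eqn:E; [|discriminate].
  destruct (replace_at ti p u) as [ti'|] eqn:E2; [|discriminate].
  inversion H; subst. rewrite (nth_error_list_set_eq _ _ _ _ E), (IH _ _ _ _ E2).
  destruct (replace_at ti p v); auto. now rewrite list_set_list_set.
Qed.

Lemma subterm_at_vars (p : pos) : forall (t v : term F V) y,
  subterm_at t p = Some v -> In y (vars v) -> In y (vars t).
Proof.
  induction p as [|i p IH]; intros t v y H Hy; simpl in *.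
  - now inversion H; subst.
  - destruct t as [x|f ts]; [discriminate|].
    destruct (nth_error ts i) as [ti|] eqn:E; [|discriminate].
    simpl. apply in_flat_map. exists ti. split; [eapply nth_error_In; eauto | eauto].
Qed.

Lemma subterm_at_ground p (t v : term F V) :
  ground t -> subterm_at t p = Some v -> ground v.
Proof.
  rewrite !ground_iff_no_vars. intros G H y Hy. eapply G, subterm_at_vars; eauto.
Qed.

End Positions.

Section Closures.
Context {A : Type}.

Lemma star_snoc (r : A -> A -> Prop) a b c : star r a b -> r b c -> star r a c.
Proof.
  induction 1; intros; [econstructor; [eauto|constructor] | econstructor; eauto].
Qed.

Lemma nsteps_snoc (r : A -> A -> Prop) m a b c :
  nsteps r m a b -> r b c -> nsteps r (S m) a c.
Proof.
  induction 1; intros; [econstructor; [eauto|constructor] | econstructor; eauto].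
Qed.

Variables (r r' : A -> A -> Prop) (P : A -> Prop).
Hypothesis r_source : forall a b, r a b -> P a.
Hypothesis r_converse : forall a b, P a -> P b -> r a b -> r' b a.

Lemma star_converse a b : star r a b -> P b -> star r' b a.
Proof.
  induction 1 as [a|a b c Hab Hbc IH]; intros Pc; [constructor|].
  assert (Pb : P b) by (inversion Hbc; subst; eauto).
  apply star_snoc with b; eauto.
Qed.

Lemma nsteps_converse m a b : nsteps r m a b -> P b -> nsteps r' m b a.
Proof.
  induction 1 as [a|m a b c Hab Hbc IH]; intros Pc; [constructor|].
  assert (Pb : P b) by (inversion Hbc; subst; eauto).
  apply nsteps_snoc with b; eauto.
Qed.

End Closures.

Lemma downward_ind (n : nat) (P : nat -> Prop) :
  (forall j, j < n -> (forall j', j < j' < n -> P j') -> P j) ->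
  forall j, j < n -> P j.
Proof.
  intros H. assert (Hd : forall d j, n - j <= d -> j < n -> P j).
  { induction d as [|d IH]; intros j Hj Hjn; [lia|].
    apply H; [assumption|]. intros j' Hj'. apply IH; lia. }
  intros j. apply (Hd (n - j) j). lia.
Qed.

Lemma Forall2_impl_In {A B} (P Q : A -> B -> Prop) l1 l2 :
  (forall a b, In a l1 -> In b l2 -> P a b -> Q a b) ->
  Forall2 P l1 l2 -> Forall2 Q l1 l2.
Proof. intros HQ H; induction H; constructor; simpl in *; auto. Qed.

Lemma Forall2_In_l {A B} (P : A -> B -> Prop) l1 l2 a :
  Forall2 P l1 l2 -> In a l1 -> exists b, In b l2 /\ P a b.
Proof.
  induction 1 as [|a' b' l1 l2 Hab _ IH]; [intros []|intros [->|Ha]].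
  - exists b'; simpl; auto.
  - destruct (IH Ha) as [b [Hb Pb]]; exists b; simpl; auto.
Qed.

Section Rules.
Context {F V L : Type}.
Implicit Types (rl : rule F V L) (R : list (rule F V L)).

Definition rule_var rl x : Prop :=
  In x (vars (lhs rl)) \/ In x (vars (rhs rl)) \/
  exists c, In c (conds rl) /\ (In x (vars (fst c)) \/ In x (vars (snd c))).

Lemma in_vars_rhs_conds_rule_var rl x : in_vars_rhs_conds rl x -> rule_var rl x.
Proof. intros [H|[c [Hc H]]]; unfold rule_var; eauto 6. Qed.

Lemma rule_var_cases rl x :
  rule_var rl x -> in_vars_rhs_conds rl x \/ in_Vbeta rl x.
Proof.
  intros H. destruct (classic (in_vars_rhs_conds rl x)) as [|Hn]; [now left | right].
  unfold in_vars_rhs_conds in Hn.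
  destruct (classic (exists c, In c (conds rl) /\ In x (vars (snd c))))
    as [[c [Hc Hx]]|Hn2].
  - right. apply In_nth_error in Hc as [i Hi]. exists i, c. split; [auto|split; [auto|]].
    intros [Hr | [j [c' [_ [Hj Hx']]]]]; apply Hn; [now left|].
    right; exists c'; split; [eapply nth_error_In; eauto | auto].
  - left. split.
    + destruct H as [H|[H|[c [Hc [H|H]]]]]; auto; exfalso; eauto.
    + intros [Hr | [c [Hc [H1|H1]]]]; eauto.
Qed.

Lemma rhs_var_not_Vbeta rl x : In x (vars (rhs rl)) -> ~ in_Vbeta rl x.
Proof. intros Hr [[_ H]|[i [c [_ [_ H]]]]]; apply H; now left. Qed.

Lemma snd_cond_var_cases rl j c x :
  nth_error (conds rl) j = Some c -> In x (vars (snd c)) ->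
  in_Vbeta rl x \/ In x (vars (rhs rl)) \/
  exists j' c', j < j' /\ nth_error (conds rl) j' = Some c' /\ In x (vars (fst c')).
Proof.
  intros Hj Hx. destruct (classic (in_Vbeta rl x)) as [|HV]; [now left | right].
  apply NNPP. intros Hn. apply HV. right. exists j, c. tauto.
Qed.

Lemma In_lbl_inj R r1 r2 :
  NoDup (map lbl R) -> In r1 R -> In r2 R -> lbl r1 = lbl r2 -> r1 = r2.
Proof.
  induction R as [|a R IH]; intros ND H1 H2 E; [destruct H1|].
  simpl in ND. inversion ND as [|? ? Hn ND']; subst.
  destruct H1 as [<-|H1], H2 as [<-|H2]; auto; exfalso; apply Hn.
  - rewrite E; now apply in_map.
  - rewrite <- E; now apply in_map.
Qed.

Lemma safe_trace_head R rl p sg pis pi :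
  NoDup (map lbl R) -> In rl R -> safe_trace R (TT (lbl rl) p sg pis :: pi) ->
  ground_subst sg /\ (forall x, in_dom sg x <-> in_Vbeta rl x) /\
  (forall pii, In pii pis -> safe_trace R pii).
Proof.
  intros Hnd Hin H.
  inversion H as [|rl0 p0 sg0 pis0 pi0 Hin0 _ Hg Hdom Hpis _ Hl]; subst.
  assert (rl0 = rl) by (apply (In_lbl_inj R); auto). now subst.
Qed.

Lemma fwd_safe_source R k a b : fwd R k a b -> safe_pair R a.
Proof. destruct k; simpl; [tauto | intros [H _]; exact H]. Qed.

Lemma bwd_safe_source R k a b : bwd R k a b -> safe_pair R a.
Proof. destruct k; simpl; [tauto | intros [H _]; exact H]. Qed.

Lemma star_fwd_ground_source R k a b :
  star (fwd R k) a b -> ground (fst b) -> ground (fst a).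
Proof.
  destruct 1 as [a|a b c Hab _]; intros Hb; [exact Hb|].
  exact (proj1 (fwd_safe_source R k a b Hab)).
Qed.

Lemma conds_matcher_ground R rl k sg pis :
  Forall2 (fun c pii => star (fwd R k) (app_subst sg (fst c), [])
                                       (app_subst sg (snd c), pii)) (conds rl) pis ->
  (forall x, in_Vbeta rl x -> ground (sg x)) ->
  (forall x, In x (vars (rhs rl)) -> ground (sg x)) ->
  forall c, In c (conds rl) ->
  forall x, In x (vars (fst c)) \/ In x (vars (snd c)) -> ground (sg x).
Proof.
  intros Hc HV Hr.
  pose (cond_ground j := forall c, nth_error (conds rl) j = Some c ->
          forall x, In x (vars (fst c)) \/ In x (vars (snd c)) -> ground (sg x)).
  assert (Hall : forall j, j < length (conds rl) -> cond_ground j).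
  { apply downward_ind. intros j _ IH c Hj.
    assert (Hsnd : forall x, In x (vars (snd c)) -> ground (sg x)).
    { intros x Hx.
      destruct (snd_cond_var_cases rl j c x Hj Hx) as [H|[H|[j' [c' [Hjj [Hj' Hx']]]]]];
        auto.
      apply (IH j') with c'; auto.
      split; [exact Hjj | apply nth_error_Some; congruence]. }
    assert (Hfst : forall x, In x (vars (fst c)) -> ground (sg x)).
    { destruct (Forall2_In_l _ _ _ c Hc (nth_error_In _ _ Hj)) as [pii [_ Hst]].
      apply ground_app_subst, (star_fwd_ground_source _ _ _ _ Hst).
      now apply ground_app_subst. }
    intros x [Hx|Hx]; auto. }
  intros c Hcin. destruct (In_nth_error _ _ Hcin) as [j Hj].
  apply (Hall j); [apply nth_error_Some; congruence | exact Hj].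
Qed.

Lemma fwd_matcher_ground R rl k sg sg' pis s t p :
  ground s -> ground t -> ground_subst sg' ->
  (forall x, in_Vbeta rl x -> in_dom sg' x) ->
  restrict sg (in_Vbeta rl) sg' ->
  subterm_at s p = Some (app_subst sg (lhs rl)) ->
  replace_at s p (app_subst sg (rhs rl)) = Some t ->
  Forall2 (fun c pii => star (fwd R k) (app_subst sg (fst c), [])
                                       (app_subst sg (snd c), pii)) (conds rl) pis ->
  forall x, rule_var rl x -> ground (sg x).
Proof.
  intros Hs Ht Hgs' Hdom' Hres Hsub Hrep Hc.
  assert (HV : forall x, in_Vbeta rl x -> ground (sg x)).
  { intros x Hx. rewrite <- (proj1 (Hres x) Hx). auto. }
  assert (Hr : forall x, In x (vars (rhs rl)) -> ground (sg x)).
  { apply ground_app_subst.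
    exact (subterm_at_ground _ _ _ Ht (subterm_at_replace_at _ _ _ _ Hrep)). }
  intros x [Hx|[Hx|[c [Hc' Hx]]]].
  - revert x Hx. apply ground_app_subst. exact (subterm_at_ground _ _ _ Hs Hsub).
  - auto.
  - exact (conds_matcher_ground R rl k sg pis Hc HV Hr c Hc' x Hx).
Qed.

End Rules.

Section ForwardToBackward.
Context {F V L : Type} (rl : rule F V L) (sg sg' : subst F V).
Hypothesis sg'_restrict : restrict sg (in_Vbeta rl) sg'.
Hypothesis sg'_dom : forall x, in_dom sg' x <-> in_Vbeta rl x.
Hypothesis sg_ground : forall x, rule_var rl x -> ground (sg x).

Definition bwd_dom x : Prop := in_vars_rhs_conds rl x /\ ~ in_dom sg' x.

Lemma restriction_bwd_dom_ground : ground_subst (restriction sg bwd_dom).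
Proof.
  intros x Hx. destruct (classic (bwd_dom x)) as [Hd|Hd].
  - rewrite restriction_in by exact Hd. apply sg_ground, in_vars_rhs_conds_rule_var, Hd.
  - unfold in_dom in Hx. rewrite restriction_notin in Hx by exact Hd. now contradiction Hx.
Qed.

Lemma restriction_bwd_dom_dom x : in_dom (restriction sg bwd_dom) x <-> bwd_dom x.
Proof.
  split; intros Hx.
  - apply NNPP. intros Hd. unfold in_dom in Hx. rewrite restriction_notin in Hx by exact Hd.
    now apply Hx.
  - unfold in_dom. rewrite restriction_in by exact Hx.
    apply ground_neq_Var, sg_ground, in_vars_rhs_conds_rule_var, Hx.
Qed.

Lemma app_subst_restriction_bwd_dom u :
  (forall x, In x (vars u) -> rule_var rl x) ->
  app_subst sg' (app_subst (restriction sg bwd_dom) u) = app_subst sg u.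
Proof.
  intros Hu. rewrite app_subst_comp. apply app_subst_ext. intros x Hx.
  destruct (classic (bwd_dom x)) as [Hd|Hd].
  - rewrite restriction_in by exact Hd. apply app_subst_ground, sg_ground, Hu, Hx.
  - rewrite restriction_notin by exact Hd. simpl.
    apply (proj1 (sg'_restrict x)). apply sg'_dom.
    destruct (rule_var_cases rl x (Hu x Hx)) as [Hc|HV].
    + apply NNPP. intros Hn. now apply Hd.
    + now apply sg'_dom.
Qed.

Lemma app_subst_restriction_bwd_dom_rhs :
  app_subst (restriction sg bwd_dom) (rhs rl) = app_subst sg (rhs rl).
Proof.
  apply app_subst_ext. intros x Hx. apply restriction_in. split; [now left|].
  intros Hd. apply (rhs_var_not_Vbeta rl x Hx), sg'_dom, Hd.
Qed.

End ForwardToBackward.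

Section BackwardToForward.
Context {F V L : Type} (rl : rule F V L) (sg' th : subst F V).
Hypothesis sg'_ground : ground_subst sg'.
Hypothesis sg'_dom : forall x, in_dom sg' x <-> in_Vbeta rl x.
Hypothesis th_ground : ground_subst th.
Hypothesis th_dom : forall x, in_dom th x <-> (in_vars_rhs_conds rl x /\ ~ in_dom sg' x).

Definition matcher_of_bwd : subst F V := fun x => app_subst sg' (th x).

Lemma th_Var x : in_dom sg' x -> th x = Var x.
Proof. intros Hx. apply NNPP. intros H. now apply (proj2 (proj1 (th_dom x) H)). Qed.

Lemma matcher_of_bwd_ground_subst : ground_subst matcher_of_bwd.
Proof.
  intros x Hx. unfold matcher_of_bwd in *. destruct (classic (in_dom th x)) as [Hd|Hd].
  - rewrite app_subst_ground; auto.
  - assert (E : th x = Var x) by (apply NNPP; exact Hd).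
    unfold in_dom in Hx. rewrite E in Hx |- *. now apply sg'_ground.
Qed.

Lemma matcher_of_bwd_ground_rhs_conds x : in_vars_rhs_conds rl x -> ground (matcher_of_bwd x).
Proof.
  intros Hx. unfold matcher_of_bwd. destruct (classic (in_dom sg' x)) as [Hd|Hd].
  - rewrite (th_Var x Hd). now apply sg'_ground.
  - rewrite app_subst_ground; apply th_ground, th_dom; auto.
Qed.

Lemma matcher_of_bwd_restrict : restrict matcher_of_bwd (in_Vbeta rl) sg'.
Proof.
  intros x. split; intros Hx.
  - unfold matcher_of_bwd. now rewrite (th_Var x (proj2 (sg'_dom x) Hx)).
  - apply NNPP. intros H. apply Hx, sg'_dom, H.
Qed.

End BackwardToForward.

Section StepReversal.
Context {F V L : Type} (R : list (rule F V L)) (k : nat).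
Hypothesis lbl_NoDup : NoDup (map lbl R).
Hypothesis star_fwd_bwd :
  forall a b, star (fwd R k) a b -> safe_pair R b -> star (bwd R k) b a.
Hypothesis star_bwd_fwd :
  forall a b, star (bwd R k) b a -> safe_pair R a -> star (fwd R k) a b.

Lemma fwd_step_bwd a b : safe_pair R b -> fwd R (S k) a b -> bwd R (S k) b a.
Proof.
  intros [Hgt Hst] [Ha [p [rl [sg [pis [t [sg' [Hin [_ [Hsub [Hc [Hrep [Hres ->]]]]]]]]]]]]].
  destruct a as [s pi]. destruct Ha as [Hgs _]. simpl in *.
  destruct (safe_trace_head R rl p sg' pis pi lbl_NoDup Hin Hst) as [Hgs' [Hdom' Hpis]].
  assert (Hg := fwd_matcher_ground R rl k sg sg' pis s t p Hgs Hgt Hgs'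
                  (fun x => proj2 (Hdom' x)) Hres Hsub Hrep Hc).
  assert (Hcond : forall c, In c (conds rl) -> forall x,
             In x (vars (fst c)) \/ In x (vars (snd c)) -> rule_var rl x).
  { intros c Hc' x Hx. unfold rule_var. eauto 6. }
  split; [split; assumption|].
  exists t, p, sg', pis, pi, rl, (restriction sg (bwd_dom rl sg')), s.
  split; [reflexivity|]. split; [exact Hin|].
  split; [now apply restriction_bwd_dom_ground|].
  split; [now apply restriction_bwd_dom_dom|].
  split.
  { rewrite app_subst_restriction_bwd_dom_rhs by assumption.
    eapply subterm_at_replace_at; eauto. }
  split.
  - refine (Forall2_impl_In _ _ _ _ _ Hc). intros c pii Hcin Hpin H. cbv beta.
    rewrite !app_subst_restriction_bwd_dom by (auto; intros x Hx; apply (Hcond c); auto).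
    apply star_fwd_bwd; [exact H|]. split; simpl; [|auto].
    apply ground_app_subst. intros x Hx. apply Hg, (Hcond c); auto.
  - split; [|reflexivity].
    rewrite app_subst_restriction_bwd_dom by (auto; intros x Hx; now left).
    rewrite (replace_at_replace_at _ _ _ _ _ Hrep). now apply replace_at_subterm_at.
Qed.

Lemma bwd_step_fwd a b : safe_pair R a -> bwd R (S k) b a -> fwd R (S k) a b.
Proof.
  intros Ha [[Hgt Hst] [t [p [sg' [pis [pi [rl [th [s
           [-> [Hin [Hgth [Hdth [Hsub [Hc [Hrep ->]]]]]]]]]]]]]]]].
  simpl in *.
  destruct (safe_trace_head R rl p sg' pis pi lbl_NoDup Hin Hst) as [Hgs' [Hdom' _]].
  assert (Hrg : ground (app_subst th (rhs rl))) by (eapply subterm_at_ground; eauto).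
  split; [exact Ha|].
  exists p, rl, (matcher_of_bwd sg' th), pis, t, sg'.
  split; [exact Hin|]. split; [now apply matcher_of_bwd_ground_subst|].
  split; [unfold matcher_of_bwd; rewrite <- app_subst_comp; eapply subterm_at_replace_at; eauto|].
  split.
  - refine (Forall2_impl_In _ _ _ _ _ Hc). intros c pii Hcin _ H. cbv beta in H |- *.
    unfold matcher_of_bwd. rewrite <- !app_subst_comp. apply star_bwd_fwd; [exact H|].
    split; simpl; [|constructor].
    rewrite app_subst_comp. apply ground_app_subst. intros x Hx.
    apply (matcher_of_bwd_ground_rhs_conds rl); auto. right; eauto.
  - split.
    + unfold matcher_of_bwd. rewrite <- app_subst_comp, (app_subst_ground sg' _ Hrg).
      rewrite (replace_at_replace_at _ _ _ _ _ Hrep). now apply replace_at_subterm_at.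
    + split; [now apply matcher_of_bwd_restrict | reflexivity].
Qed.

End StepReversal.

Lemma fwd_iff_bwd {F V L : Type} (R : list (rule F V L)) :
  NoDup (map lbl R) -> forall k a b, safe_pair R a -> safe_pair R b ->
  (fwd R k a b <-> bwd R k b a).
Proof.
  intros Hlbl k. induction k as [|k IH]; intros a b Ha Hb; [simpl; tauto|].
  assert (star_fwd_bwd : forall a b, star (fwd R k) a b -> safe_pair R b ->
                                     star (bwd R k) b a).
  { apply star_converse with (P := safe_pair R); [apply fwd_safe_source|].
    intros a' b' Pa Pb. apply (IH a' b' Pa Pb). }
  assert (star_bwd_fwd : forall a b, star (bwd R k) b a -> safe_pair R a ->
                                     star (fwd R k) a b).
  { intros a' b' H. revert H.
    apply star_converse with (P := safe_pair R); [apply bwd_safe_source|].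
    intros x y Px Py. apply (IH y x Py Px). }
  split; [apply fwd_step_bwd | apply bwd_step_fwd]; assumption.
Qed.

Theorem mainTheorem10 (F V L : Type) (R : list (rule F V L)) (HR : dctrs R)
  (s t : term F V) (pi pi' : trace F V L)
  (Hs : safe_pair R (s, pi)) (Ht : safe_pair R (t, pi'))
  (k m : nat) :
  nsteps (fwd R k) m (s, pi) (t, pi') <-> nsteps (bwd R k) m (t, pi') (s, pi).
Proof.
  destruct HR as [Hlbl _]. split; intros H.
  - revert H Ht. apply nsteps_converse with (P := safe_pair R); [apply fwd_safe_source|].
    intros a b Pa Pb. apply (fwd_iff_bwd R Hlbl k a b Pa Pb).
  - revert H Hs. apply nsteps_converse with (P := safe_pair R); [apply bwd_safe_source|].
    intros a b Pa Pb. apply (fwd_iff_bwd R Hlbl k b a Pb Pa).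
Qed.
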